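(* Let $\alpha,\beta\in(0,\pi]$ and let $f:S_\alpha\to S_\beta$, $f(z)=z^{\beta/\alpha}$ (principal branch). Then for all $x,y\in S_\alpha$: if $\alpha\le\beta$, $$s_{S_\alpha}(x,y)\le s_{S_\beta}(f(x),f(y))\le\frac{\beta\sin(\alpha/2)}{\alpha\sin(\beta/2)}\,s_{S_\alpha}(x,y);$$ otherwise (if $\alpha>\beta$), $$\frac{\beta\sin(\alpha/2)}{\alpha\sin(\beta/2)}\,s_{S_\alpha}(x,y)\le s_{S_\beta}(f(x),f(y))\le s_{S_\alpha}(x,y).$$ Furthermore, the constants here are sharp.
   Context: $S_\theta=\{x\in\mathbb{C}:0<\arg(x)<\theta\}$. For a domain $G\subsetneq\mathbb{C}$, $s_G(x,y)=\frac{|x-y|}{\inf_{z\in\partial G}(|x-z|+|z-y|)}$. *)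

From Stdlib Require Import Reals.
From Coquelicot Require Import Coquelicot.
Open Scope R_scope.

Definition Arg (z : C) : R :=
  if Req_EM_T (Cmod z) 0 then 0
  else if Rle_dec 0 (Im z) then acos (Re z / Cmod z)
  else - acos (Re z / Cmod z).

Definition sector (theta : R) (x : C) : Prop :=
  x <> 0%C /\ 0 < Arg x /\ Arg x < theta.

Definition boundary (G : C -> Prop) (z : C) : Prop :=
  forall eps : R, 0 < eps ->
    (exists w, G w /\ Cmod (Cminus w z) < eps) /\
    (exists w, ~ G w /\ Cmod (Cminus w z) < eps).

Definition s_metric (G : C -> Prop) (x y : C) : R :=
  Cmod (Cminus x y) /
  real (Glb_Rbar (fun r => exists z, boundary G z /\
                     r = Cmod (Cminus x z) + Cmod (Cminus z y))).

Definition cpow (z : C) (p : R) : C :=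
  (Rpower (Cmod z) p * cos (p * Arg z), Rpower (Cmod z) p * sin (p * Arg z)).

(* In polar coordinates x = r e^{i th}, y = s e^{i ph}, the infimum defining s_{S_g}(x, y) is
   attained where the segment from x to the mirror image of y in the nearer edge meets that
   edge, which gives s_{S_g}(x, y)^2 = (sinh^2 w + sin^2 d) / (sinh^2 w + sin^2 e) with
   w = ln (s / r) / 2, d = |th - ph| / 2 and e = min (th + ph, 2 g - th - ph) / 2 <= g / 2.
   The power map multiplies w, d and e by p = beta / alpha, so everything reduces to comparing
   this ratio at (w, d, e) and (p w, p d, p e). For p >= 1 the ratio grows, because
   sinh (p w) >= p sinh w while sin (p d) <= p sin d and sin (p t) / sin t decreases. Its growth
   is largest for the bisector configuration d = 0, e = g / 2, where it is bounded by
   p sin (g / 2) / sin (p g / 2) through the monotonicity of q^2 / sinh^2 (q w) + q^2 / 3 and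
   of q^2 / sin^2 (q g) - q^2 / 3. The case p < 1 follows by exchanging the two sectors.
   Both constants are approached: by two nearby points on the unit circle close to an edge
   (ratio -> 1) and by two nearby points on the bisector (ratio -> K). *)

From Stdlib Require Import Reals.
From Coquelicot Require Import Coquelicot.
From Stdlib Require Import Lra Psatz.
Open Scope R_scope.

Lemma le_of_is_derive_nonneg (f df : R -> R) a b : a <= b ->
  (forall x, a <= x <= b -> is_derive f x (df x)) ->
  (forall x, a <= x <= b -> 0 <= df x) -> f a <= f b.
Proof.
  intros Hab Hd Hpos. destruct (Req_dec a b) as [<-|Hne]; [lra|].
  destruct (MVT_cor3 f df a b) as [c [Hac [Hcb ->]]]; [lra| |].
  - intros x Hax Hxb. apply is_derive_Reals, Hd. lra.
  - specialize (Hpos c ltac:(lra)). nra.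
Qed.

Lemma sin2_add_cos2 t : sin t ^ 2 + cos t ^ 2 = 1.
Proof. pose proof (sin2_cos2 t) as H. unfold Rsqr in H. lra. Qed.

(** * Hyperbolic functions *)

Lemma sinh_opp x : sinh (- x) = - sinh x.
Proof. unfold sinh. rewrite Ropp_involutive. field. Qed.

Lemma cosh_ge_1 x : 1 <= cosh x.
Proof.
  unfold cosh. rewrite exp_Ropp. pose proof (exp_pos x).
  assert (0 <= (exp x - 1) ^ 2 / exp x) by (apply Rdiv_le_0_compat; [apply pow2_ge_0 | lra]).
  replace ((exp x + / exp x) / 2) with (1 + (exp x - 1) ^ 2 / exp x / 2) by (field; lra).
  lra.
Qed.

Lemma sinh_ge_id x : 0 <= x -> x <= sinh x.
Proof.
  intros Hx.
  enough (H : sinh 0 - 0 <= sinh x - x) by (rewrite sinh_0 in H; lra).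
  apply (le_of_is_derive_nonneg (fun t => sinh t - t) (fun t => cosh t - 1)); [lra| |].
  - intros t _. unfold sinh, cosh. auto_derive; auto. field.
  - intros t _. pose proof (cosh_ge_1 t). lra.
Qed.

Lemma sinh_pos x : 0 < x -> 0 < sinh x.
Proof. intros Hx. pose proof (sinh_ge_id x). lra. Qed.

Lemma cosh_le x y : 0 <= x <= y -> cosh x <= cosh y.
Proof.
  intros Hxy. apply (le_of_is_derive_nonneg cosh sinh); [lra| |].
  - intros t _. unfold sinh, cosh. auto_derive; auto. field.
  - intros t Ht. pose proof (sinh_ge_id t). lra.
Qed.

Lemma sinh_scale_ge p w : 1 <= p -> 0 <= w -> p * sinh w <= sinh (p * w).
Proof.
  intros Hp Hw.
  enough (H : sinh (p * 0) - p * sinh 0 <= sinh (p * w) - p * sinh w)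
    by (rewrite Rmult_0_r, sinh_0 in H; lra).
  apply (le_of_is_derive_nonneg (fun t => sinh (p * t) - p * sinh t)
           (fun t => p * (cosh (p * t) - cosh t))); [lra| |].
  - intros t _. unfold sinh, cosh. auto_derive; auto. field.
  - intros t Ht. pose proof (cosh_le t (p * t) ltac:(nra)). nra.
Qed.

Lemma sinh_sq_abs w : sinh w ^ 2 = sinh (Rabs w) ^ 2.
Proof.
  unfold Rabs. destruct (Rcase_abs w); [|reflexivity].
  rewrite sinh_opp. ring.
Qed.

Lemma sinh_sq_scale_ge p w : 1 <= p -> p ^ 2 * sinh w ^ 2 <= sinh (p * w) ^ 2.
Proof.
  intros Hp. rewrite sinh_sq_abs, (sinh_sq_abs (p * w)), Rabs_mult, (Rabs_right p) by lra.
  pose proof (Rabs_pos w) as Hw.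
  pose proof (sinh_scale_ge p _ Hp Hw). pose proof (sinh_ge_id _ Hw).
  replace (p ^ 2 * sinh (Rabs w) ^ 2) with ((p * sinh (Rabs w)) ^ 2) by ring.
  apply pow_incr. split; [apply Rmult_le_pos|]; lra.
Qed.

Lemma mul_cosh_le_sinh_cube v : 0 <= v -> 3 * v * cosh v <= sinh v ^ 3 + 3 * sinh v.
Proof.
  intros Hv.
  enough (H : sinh 0 ^ 3 + 3 * sinh 0 - 3 * 0 * cosh 0 <= sinh v ^ 3 + 3 * sinh v - 3 * v * cosh v)
    by (rewrite sinh_0 in H; lra).
  apply (le_of_is_derive_nonneg (fun t => sinh t ^ 3 + 3 * sinh t - 3 * t * cosh t)
           (fun t => 3 * sinh t * (sinh t * cosh t - t))); [lra| |].
  - intros t _. unfold sinh, cosh. auto_derive; auto. field.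
  - intros t Ht. pose proof (sinh_ge_id t ltac:(lra)). pose proof (cosh_ge_1 t).
    assert (0 <= sinh t * cosh t - t) by nra. nra.
Qed.

Lemma inv_sinh_sq_le w p : 0 < w -> 1 <= p ->
  1 / sinh w ^ 2 <= p ^ 2 / sinh (p * w) ^ 2 + (p ^ 2 - 1) / 3.
Proof.
  intros Hw Hp.
  enough (H : 1 ^ 2 / sinh (1 * w) ^ 2 + (1 ^ 2 - 1) / 3 <= p ^ 2 / sinh (p * w) ^ 2 + (p ^ 2 - 1) / 3)
    by (rewrite Rmult_1_l in H; lra).
  apply (le_of_is_derive_nonneg (fun q => q ^ 2 / sinh (q * w) ^ 2 + (q ^ 2 - 1) / 3)
           (fun q => 2 * q / (3 * sinh (q * w) ^ 3) *
              (sinh (q * w) ^ 3 + 3 * sinh (q * w) - 3 * (q * w) * cosh (q * w)))); [lra| |].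
  - intros q Hq. assert (0 < sinh (q * w)) by (apply sinh_pos; nra).
    unfold sinh, cosh in *. auto_derive; [nra|]. field. lra.
  - intros q Hq. assert (0 < sinh (q * w)) by (apply sinh_pos; nra).
    pose proof (mul_cosh_le_sinh_cube (q * w) ltac:(nra)).
    apply Rmult_le_pos; [|lra]. apply Rdiv_le_0_compat; [lra|].
    apply Rmult_lt_0_compat; [lra|]. now apply pow_lt.
Qed.

(** * Sine inequalities *)

Lemma sin_le_id x : 0 <= x -> sin x <= x.
Proof. intros [Hx|<-]; [now apply Rlt_le, sin_lt_x | rewrite sin_0; lra]. Qed.

Lemma mul_cos_add_sin_cube_le v : 0 <= v <= PI -> 3 * v * cos v + sin v ^ 3 <= 3 * sin v.
Proof.
  intros Hv.
  enough (H : 3 * sin 0 - 3 * 0 * cos 0 - sin 0 ^ 3 <= 3 * sin v - 3 * v * cos v - sin v ^ 3)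
    by (rewrite sin_0 in H; lra).
  apply (le_of_is_derive_nonneg (fun t => 3 * sin t - 3 * t * cos t - sin t ^ 3)
           (fun t => 3 * sin t * (t - sin t * cos t))); [lra| |].
  - intros t _. auto_derive; auto. ring.
  - intros t Ht. pose proof (sin_ge_0 t ltac:(lra) ltac:(lra)).
    pose proof (sin_le_id t ltac:(lra)). pose proof (COS_bound t).
    assert (0 <= t - sin t * cos t) by nra. nra.
Qed.

Lemma inv_sin_sq_le g p : 0 < g -> 1 <= p -> p * g <= PI / 2 ->
  1 / sin g ^ 2 <= p ^ 2 / sin (p * g) ^ 2 - (p ^ 2 - 1) / 3.
Proof.
  intros Hg Hp Hpg. pose proof PI_RGT_0 as HPI.
  enough (H : 1 ^ 2 / sin (1 * g) ^ 2 - (1 ^ 2 - 1) / 3 <= p ^ 2 / sin (p * g) ^ 2 - (p ^ 2 - 1) / 3)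
    by (rewrite Rmult_1_l in H; lra).
  apply (le_of_is_derive_nonneg (fun q => q ^ 2 / sin (q * g) ^ 2 - (q ^ 2 - 1) / 3)
           (fun q => 2 * q / (3 * sin (q * g) ^ 3) *
              (3 * sin (q * g) - 3 * (q * g) * cos (q * g) - sin (q * g) ^ 3))); [lra| |].
  - intros q Hq. assert (0 < sin (q * g)) by (apply sin_gt_0; nra).
    auto_derive; [nra|]. field. lra.
  - intros q Hq. assert (0 < sin (q * g)) by (apply sin_gt_0; nra).
    pose proof (mul_cos_add_sin_cube_le (q * g) ltac:(nra)).
    apply Rmult_le_pos; [|lra]. apply Rdiv_le_0_compat; [lra|].
    apply Rmult_lt_0_compat; [lra|]. now apply pow_lt.
Qed.

Lemma sin_scale_le p x : 1 <= p -> 0 <= x -> p * x <= PI -> sin (p * x) <= p * sin x.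
Proof.
  intros Hp Hx Hpx.
  enough (H : p * sin 0 - sin (p * 0) <= p * sin x - sin (p * x))
    by (rewrite Rmult_0_r, sin_0 in H; lra).
  apply (le_of_is_derive_nonneg (fun t => p * sin t - sin (p * t))
           (fun t => p * (cos t - cos (p * t)))); [lra| |].
  - intros t _. auto_derive; auto. ring.
  - intros t Ht.
    pose proof (cos_decr_1 t (p * t) ltac:(lra) ltac:(nra) ltac:(nra) ltac:(nra) ltac:(nra)).
    nra.
Qed.

Lemma sin_scale_div_antitone p d e : 1 <= p -> 0 < d <= e -> p * e <= PI / 2 ->
  sin (p * e) / sin e <= sin (p * d) / sin d.
Proof.
  intros Hp Hde Hpe. pose proof PI_RGT_0 as HPI.
  assert (Hsign : forall t, 0 <= t -> p * t <= PI ->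
                    p * cos (p * t) * sin t - sin (p * t) * cos t <= 0).
  { intros x Hx Hpx.
    enough (H : - (p * cos (p * 0) * sin 0 - sin (p * 0) * cos 0) <=
                - (p * cos (p * x) * sin x - sin (p * x) * cos x))
      by (rewrite Rmult_0_r, sin_0 in H; lra).
    apply (le_of_is_derive_nonneg (fun t => - (p * cos (p * t) * sin t - sin (p * t) * cos t))
             (fun t => (p ^ 2 - 1) * sin (p * t) * sin t)); [lra| |].
    - intros t _. auto_derive; auto. ring.
    - intros t Ht. pose proof (sin_ge_0 t ltac:(lra) ltac:(nra)).
      pose proof (sin_ge_0 (p * t) ltac:(nra) ltac:(nra)).
      apply Rmult_le_pos; [apply Rmult_le_pos|]; nra. }
  enough (H : - (sin (p * d) / sin d) <= - (sin (p * e) / sin e)) by lra.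
  apply (le_of_is_derive_nonneg (fun t => - (sin (p * t) / sin t))
           (fun t => - (p * cos (p * t) * sin t - sin (p * t) * cos t) / sin t ^ 2)); [lra| |].
  - intros t Ht. assert (0 < sin t) by (apply sin_gt_0; nra).
    auto_derive; [lra|]. field. lra.
  - intros t Ht. assert (0 < sin t) by (apply sin_gt_0; nra).
    pose proof (Hsign t ltac:(lra) ltac:(nra)).
    apply Rdiv_le_0_compat; [lra|]. now apply pow_lt.
Qed.

(** * The key inequality in log-polar coordinates *)

(* [|r e^{ia} - s e^{ib}|^2 = 4 r s * chord (ln (s / r) / 2) ((a - b) / 2)] *)
Definition chord (w t : R) : R := sinh w ^ 2 + sin t ^ 2.

Definition s_polar (w d e : R) : R := sqrt (chord w d / chord w e).

Lemma chord_pos w t : 0 < sin t -> 0 < chord w t.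
Proof. intros Ht. unfold chord. pose proof (pow2_ge_0 (sinh w)). pose proof (pow_lt _ 2 Ht). lra. Qed.

Lemma sin_sq_scale_le p x : 1 <= p -> 0 <= x -> p * x <= PI -> sin (p * x) ^ 2 <= p ^ 2 * sin x ^ 2.
Proof.
  intros Hp Hx Hpx. pose proof (sin_scale_le p x Hp Hx Hpx).
  pose proof (sin_ge_0 (p * x) ltac:(nra) Hpx). nra.
Qed.

Lemma sin_sq_scale_cross p d e : 1 <= p -> 0 <= d <= e -> 0 < e -> p * e <= PI / 2 ->
  sin d ^ 2 * sin (p * e) ^ 2 <= sin (p * d) ^ 2 * sin e ^ 2.
Proof.
  intros Hp Hde He Hpe. pose proof PI_RGT_0.
  destruct (Req_dec d 0) as [->|Hd0].
  { rewrite sin_0. pose proof (pow2_ge_0 (sin (p * 0) * sin e)). nra. }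
  pose proof (sin_scale_div_antitone p d e Hp ltac:(lra) Hpe) as Hanti.
  assert (0 < sin d) by (apply sin_gt_0; nra).
  assert (0 < sin e) by (apply sin_gt_0; nra).
  assert (0 <= sin (p * e)) by (apply sin_ge_0; nra).
  assert (Hcross : sin (p * e) * sin d <= sin (p * d) * sin e).
  { apply Rmult_le_reg_r with (/ (sin d * sin e)); [apply Rinv_0_lt_compat; nra|].
    replace (sin (p * e) * sin d * / (sin d * sin e)) with (sin (p * e) / sin e) by (field; lra).
    replace (sin (p * d) * sin e * / (sin d * sin e)) with (sin (p * d) / sin d) by (field; lra).
    exact Hanti. }
  replace (sin d ^ 2 * sin (p * e) ^ 2) with ((sin (p * e) * sin d) ^ 2) by ring.
  replace (sin (p * d) ^ 2 * sin e ^ 2) with ((sin (p * d) * sin e) ^ 2) by ring.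
  apply pow_incr. split; [apply Rmult_le_pos|]; lra.
Qed.

Lemma add_ratio_le a b c a' b' c' k : 0 <= a -> 0 <= b <= c -> 0 < c ->
  k * a <= a' -> b' <= k * b -> c' <= k * c -> b * c' <= b' * c -> 0 <= b' -> 0 <= c' ->
  (a + b) * (a' + c') <= (a' + b') * (a + c).
Proof.
  intros Ha Hb Hc Hka Hkb Hkc Hratio Hb' Hc'.
  assert (Hgap : c' - b' <= k * (c - b)).
  { assert (0 <= c * (k * c - k * b - c' + b')).
    { assert (0 <= (c - b) * (k * c - c')) by (apply Rmult_le_pos; lra). nra. }
    destruct (Rle_or_lt 0 (k * c - k * b - c' + b')); nra. }
  assert (0 <= (a' - k * a) * (c - b)) by (apply Rmult_le_pos; lra).
  assert (0 <= a * (k * (c - b) - (c' - b'))) by (apply Rmult_le_pos; lra).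
  nra.
Qed.

Lemma chord_scale_cross p w d e : 1 <= p -> 0 <= d <= e -> 0 < e -> p * e <= PI / 2 ->
  chord w d * chord (p * w) (p * e) <= chord (p * w) (p * d) * chord w e.
Proof.
  intros Hp Hde He Hpe. pose proof PI_RGT_0. unfold chord.
  apply (add_ratio_le _ _ _ _ _ _ (p ^ 2)).
  - apply pow2_ge_0.
  - split; [apply pow2_ge_0|].
    assert (sin d <= sin e)
      by (destruct (Req_dec d e) as [->|]; [lra | apply Rlt_le, sin_increasing_1; nra]).
    pose proof (sin_ge_0 d ltac:(lra) ltac:(nra)). nra.
  - assert (0 < sin e) by (apply sin_gt_0; nra). nra.
  - now apply sinh_sq_scale_ge.
  - apply sin_sq_scale_le; nra.
  - apply sin_sq_scale_le; nra.
  - now apply sin_sq_scale_cross.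
  - apply pow2_ge_0.
  - apply pow2_ge_0.
Qed.

Lemma bisector_gain_cross p w g : 1 <= p -> w <> 0 -> 0 < g -> p * g <= PI / 2 ->
  sinh (p * w) ^ 2 * sin (p * g) ^ 2 * (sinh w ^ 2 + sin g ^ 2) <=
  p ^ 2 * sinh w ^ 2 * sin g ^ 2 * (sinh (p * w) ^ 2 + sin (p * g) ^ 2).
Proof.
  intros Hp Hw Hg Hpg. pose proof PI_RGT_0.
  pose proof (inv_sinh_sq_le (Rabs w) p ltac:(now apply Rabs_pos_lt) Hp) as Hsh.
  pose proof (inv_sin_sq_le g p Hg Hp Hpg) as Hsin.
  replace (p * Rabs w) with (Rabs (p * w)) in Hsh by (rewrite Rabs_mult, (Rabs_right p) by lra; ring).
  rewrite <- !sinh_sq_abs in Hsh.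
  assert (Ha : 0 < sinh w ^ 2) by (rewrite sinh_sq_abs; apply pow_lt, sinh_pos, Rabs_pos_lt, Hw).
  pose proof (sinh_sq_scale_ge p w Hp).
  assert (Hp2 : 1 <= p ^ 2) by nra. assert (Ha' : 0 < sinh (p * w) ^ 2) by nra.
  assert (HS : 0 < sin g ^ 2) by (apply pow_lt, sin_gt_0; nra).
  assert (HS' : 0 < sin (p * g) ^ 2) by (apply pow_lt, sin_gt_0; nra).
  set (a := sinh w ^ 2) in *. set (a' := sinh (p * w) ^ 2) in *.
  set (S := sin g ^ 2) in *. set (S' := sin (p * g) ^ 2) in *.
  apply Rmult_le_reg_r with (/ (a * a' * S * S')).
  { apply Rinv_0_lt_compat, Rmult_lt_0_compat; [apply Rmult_lt_0_compat; [apply Rmult_lt_0_compat|]|];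
      assumption. }
  replace (a' * S' * (a + S) * / (a * a' * S * S')) with (1 / a + 1 / S) by (field; lra).
  replace (p ^ 2 * a * S * (a' + S') * / (a * a' * S * S')) with (p ^ 2 / a' + p ^ 2 / S')
    by (field; lra).
  lra.
Qed.

Lemma chord_scale_cross_bound p w d e g : 1 <= p -> 0 <= d <= e -> 0 < e -> e <= g ->
  p * g <= PI / 2 ->
  sin (p * g) ^ 2 * (chord (p * w) (p * d) * chord w e) <=
  p ^ 2 * sin g ^ 2 * (chord w d * chord (p * w) (p * e)).
Proof.
  intros Hp Hde He Heg Hpg. pose proof PI_RGT_0.
  pose proof (chord_scale_cross p w e g Hp ltac:(lra) ltac:(lra) Hpg) as Hbis.
  pose proof (sin_sq_scale_le p d Hp ltac:(lra) ltac:(nra)) as Hb.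
  pose proof (sinh_sq_scale_ge p w Hp) as Ha.
  assert (HS : 0 < sin g ^ 2) by (apply pow_lt, sin_gt_0; nra).
  assert (HS' : 0 < sin (p * g) ^ 2) by (apply pow_lt, sin_gt_0; nra).
  unfold chord in *.
  set (a := sinh w ^ 2) in *. set (a' := sinh (p * w) ^ 2) in *.
  set (b := sin d ^ 2) in *. set (b' := sin (p * d) ^ 2) in *.
  set (c := sin e ^ 2) in *. set (c' := sin (p * e) ^ 2) in *.
  set (S := sin g ^ 2) in *. set (S' := sin (p * g) ^ 2) in *.
  assert (0 <= b) by apply pow2_ge_0. assert (0 <= b') by apply pow2_ge_0.
  assert (0 <= c) by apply pow2_ge_0. assert (0 <= c') by apply pow2_ge_0.
  destruct (Req_dec w 0) as [Hw|Hw].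
  - assert (Ha0 : a = 0) by (unfold a; rewrite Hw, sinh_0; ring).
    assert (Ha'0 : a' = 0) by (unfold a'; rewrite Hw, Rmult_0_r, sinh_0; ring).
    rewrite Ha0, Ha'0 in *.
    assert (0 <= (p ^ 2 * b - b') * (c * S')) by (apply Rmult_le_pos; nra).
    assert (0 <= p ^ 2 * b * (c' * S - c * S')) by (apply Rmult_le_pos; nra).
    nra.
  - assert (Hapos : 0 < a) by (unfold a; rewrite sinh_sq_abs; apply pow_lt, sinh_pos, Rabs_pos_lt, Hw).
    assert (Hp2 : 1 <= p ^ 2) by nra.
    assert (Ha'pos : 0 < a') by nra.
    (* the bisector pair [d = 0], [e = g] has the largest gain *)
    assert (Hnum : a * (a' + b') <= a' * (a + b)) by nra.
    pose proof (bisector_gain_cross p w g Hp Hw ltac:(lra) Hpg) as Hgain. fold a a' S S' in Hgain.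
    apply Rmult_le_reg_l with (a * (a' + S')); [nra|].
    assert (Hchain : a * (a' + b') * ((a + c) * (a' + S')) <= a' * (a + b) * ((a' + c') * (a + S)))
      by (apply Rmult_le_compat; nra).
    assert (Hbound : (a + b) * (a' + c') * (a' * S' * (a + S)) <=
                     (a + b) * (a' + c') * (p ^ 2 * a * S * (a' + S')))
      by (apply Rmult_le_compat_l; nra).
    nra.
Qed.

Lemma div_le_div_of_cross a b c d : 0 < b -> 0 < d -> a * d <= c * b -> a / b <= c / d.
Proof.
  intros Hb Hd H. apply Rmult_le_reg_r with (b * d); [nra|].
  replace (a / b * (b * d)) with (a * d) by (field; lra).
  replace (c / d * (b * d)) with (c * b) by (field; lra). exact H.
Qed.

Lemma s_polar_expand_bounds p w d e g : 1 <= p -> 0 <= d <= e -> 0 < e -> e <= g ->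
  p * g <= PI / 2 ->
  s_polar w d e <= s_polar (p * w) (p * d) (p * e) <=
  p * sin g / sin (p * g) * s_polar w d e.
Proof.
  intros Hp Hde He Heg Hpg. pose proof PI_RGT_0.
  assert (Hce : 0 < chord w e) by (apply chord_pos, sin_gt_0; nra).
  assert (Hcpe : 0 < chord (p * w) (p * e)) by (apply chord_pos, sin_gt_0; nra).
  assert (Hsg : 0 < sin g) by (apply sin_gt_0; nra).
  assert (Hspg : 0 < sin (p * g)) by (apply sin_gt_0; nra).
  split.
  - apply sqrt_le_1_alt, div_le_div_of_cross; auto.
    apply chord_scale_cross; auto. nra.
  - set (K := p * sin g / sin (p * g)).
    assert (HK : 0 <= K) by (apply Rdiv_le_0_compat; nra).
    unfold s_polar. rewrite <- (sqrt_pow2 K HK), <- sqrt_mult_alt by apply pow2_ge_0.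
    apply sqrt_le_1_alt.
    replace (K ^ 2 * (chord w d / chord w e)) with
      (p ^ 2 * sin g ^ 2 * chord w d / (sin (p * g) ^ 2 * chord w e)) by (unfold K; field; lra).
    apply div_le_div_of_cross; [assumption | apply Rmult_lt_0_compat; [apply pow_lt|]; lra |].
    pose proof (chord_scale_cross_bound p w d e g Hp Hde He Heg Hpg). nra.
Qed.

Lemma s_polar_contract_bounds p w d e g : 0 < p <= 1 -> 0 <= d <= e -> 0 < e -> e <= g ->
  g <= PI / 2 ->
  p * sin g / sin (p * g) * s_polar w d e <= s_polar (p * w) (p * d) (p * e) <=
  s_polar w d e.
Proof.
  intros Hp Hde He Heg Hg. pose proof PI_RGT_0.
  set (q := / p).
  assert (Hq : 1 <= q) by (unfold q; rewrite <- Rinv_1; apply Rinv_le_contravar; lra).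
  assert (Hqp : forall x, q * (p * x) = x) by (intros x; unfold q; field; lra).
  destruct (s_polar_expand_bounds q (p * w) (p * d) (p * e) (p * g) Hq ltac:(nra) ltac:(nra)
              ltac:(nra) ltac:(rewrite Hqp; lra)) as [Hlo Hhi].
  rewrite !Hqp in Hlo, Hhi. rewrite Hqp in Hhi.
  split; [|exact Hlo].
  assert (Hsg : 0 < sin g) by (apply sin_gt_0; nra).
  assert (Hspg : 0 < sin (p * g)) by (apply sin_gt_0; nra).
  apply Rmult_le_reg_l with (q * sin (p * g) / sin g); [apply Rdiv_lt_0_compat; nra|].
  replace (q * sin (p * g) / sin g * (p * sin g / sin (p * g) * s_polar w d e))
    with (s_polar w d e) by (unfold q; field; lra).
  exact Hhi.
Qed.

(** * Polar coordinates *)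

Definition polar (r t : R) : C := (r * cos t, r * sin t).

Lemma Cmod_polar r t : 0 <= r -> Cmod (polar r t) = r.
Proof.
  intros Hr. unfold Cmod, polar; cbn [fst snd].
  replace ((r * cos t) ^ 2 + (r * sin t) ^ 2) with (r ^ 2) by (pose proof (sin2_add_cos2 t); nra).
  now apply sqrt_pow2.
Qed.

Lemma Arg_polar r t : 0 < r -> 0 <= t <= PI -> Arg (polar r t) = t.
Proof.
  intros Hr Ht. unfold Arg. rewrite Cmod_polar by lra.
  destruct (Req_EM_T r 0) as [|_]; [lra|].
  assert (0 <= sin t) by (apply sin_ge_0; lra).
  destruct (Rle_dec 0 (Im (polar r t))) as [_|Hneg].
  - unfold polar, Re; cbn [fst snd]. replace (r * cos t / r) with (cos t) by (field; lra).
    apply acos_cos; lra.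
  - exfalso. apply Hneg. unfold polar, Im; cbn [fst snd]. nra.
Qed.

Lemma polar_Cmod_Arg (z : C) : z <> 0%C -> z = polar (Cmod z) (Arg z) /\ - PI <= Arg z <= PI.
Proof.
  intros Hz. pose proof (proj1 (Cmod_gt_0 z) Hz) as Hm.
  set (m := Cmod z) in *.
  assert (Hm2 : m ^ 2 = fst z ^ 2 + snd z ^ 2) by (apply pow2_sqrt; nra).
  assert (Hre : -1 <= fst z / m <= 1).
  { assert (Hfst : Rabs (fst z) <= m) by apply re_le_Cmod. apply Rabs_le_between.
    rewrite Rabs_div, (Rabs_right m) by lra.
    apply Rmult_le_reg_r with m; [lra|]. unfold Rdiv. rewrite Rmult_assoc, Rinv_l; lra. }
  assert (Hsin : sqrt (1 - (fst z / m)²) = Rabs (snd z) / m).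
  { replace (1 - (fst z / m)²) with ((Rabs (snd z) / m) ^ 2).
    - apply sqrt_pow2, Rdiv_le_0_compat; [apply Rabs_pos | lra].
    - replace ((Rabs (snd z) / m) ^ 2) with (Rabs (snd z) ^ 2 / m ^ 2) by (field; lra).
      rewrite pow2_abs. replace (snd z ^ 2) with (m ^ 2 - fst z ^ 2) by lra.
      unfold Rsqr. field. lra. }
  unfold Arg. fold m. destruct (Req_EM_T m 0) as [|_]; [lra|].
  pose proof (acos_bound (Re z / m)).
  destruct z as [z1 z2]. unfold polar, Re, Im in *; cbn [fst snd] in *.
  destruct (Rle_dec 0 z2) as [Hi|Hi]; (split; [|lra]).
  - rewrite cos_acos, sin_acos, Hsin, Rabs_right by lra. f_equal; field; lra.
  - rewrite cos_neg, sin_neg, cos_acos, sin_acos, Hsin, Rabs_left by lra. f_equal; field; lra.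
Qed.

Definition dist_at_angle (r s t : R) : R := sqrt (r ^ 2 + s ^ 2 - 2 * r * s * cos t).

Lemma polar_sub_Cmod r s t u : Cmod (Cminus (polar r t) (polar s u)) = dist_at_angle r s (t - u).
Proof.
  unfold Cmod, Cminus, Cplus, Copp, polar, dist_at_angle; cbn [fst snd]. f_equal. rewrite cos_minus.
  pose proof (sin2_add_cos2 t). pose proof (sin2_add_cos2 u). nra.
Qed.

Lemma cpow_polar r t p : 0 < r -> 0 <= t <= PI -> cpow (polar r t) p = polar (Rpower r p) (p * t).
Proof. intros Hr Ht. unfold cpow. now rewrite Cmod_polar, Arg_polar by lra. Qed.

Lemma law_of_cosines_chord r s t : 0 < r -> 0 < s ->
  r ^ 2 + s ^ 2 - 2 * r * s * cos t = 4 * r * s * chord ((ln s - ln r) / 2) (t / 2).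
Proof.
  intros Hr Hs. unfold chord.
  replace (cos t) with (1 - 2 * sin (t / 2) * sin (t / 2)) by (rewrite <- cos_2a_sin; f_equal; field).
  set (u := exp ((ln s - ln r) / 2)).
  assert (Hu : 0 < u) by apply exp_pos.
  assert (Hsu : s = r * (u * u)).
  { unfold u. rewrite <- exp_plus.
    replace ((ln s - ln r) / 2 + (ln s - ln r) / 2) with (ln s - ln r) by field.
    unfold Rminus. rewrite exp_plus, exp_Ropp, !exp_ln by assumption. field. lra. }
  unfold sinh. rewrite exp_Ropp. fold u. rewrite Hsu. field. lra.
Qed.

(** * The sector and its boundary *)

(* signed distance from [z] to the line of angle [g], positive on the side of the sector *)
Definition edge_gap (g : R) (z : C) : R := fst z * sin g - snd z * cos g.

Lemma edge_gap_polar g r a : edge_gap g (polar r a) = r * sin (g - a).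
Proof. unfold edge_gap, polar; cbn [fst snd]. rewrite sin_minus. ring. Qed.

Lemma sector_iff g z : 0 < g <= PI -> sector g z <-> 0 < snd z /\ 0 < edge_gap g z.
Proof.
  intros Hg. split.
  - intros [Hz [Hpos Hlt]]. destruct (polar_Cmod_Arg z Hz) as [Ez _].
    pose proof (proj1 (Cmod_gt_0 z) Hz). rewrite Ez, edge_gap_polar. unfold polar; cbn [snd].
    assert (0 < sin (Arg z)) by (apply sin_gt_0; lra).
    assert (0 < sin (g - Arg z)) by (apply sin_gt_0; lra).
    split; nra.
  - intros [Hy Hgap].
    assert (Hz : z <> 0%C) by (intros ->; cbn in Hy; lra).
    destruct (polar_Cmod_Arg z Hz) as [Ez Harg]. pose proof (proj1 (Cmod_gt_0 z) Hz).
    rewrite Ez, edge_gap_polar in Hgap. rewrite Ez in Hy. unfold polar in Hy; cbn [snd] in Hy.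
    set (t := Arg z) in *.
    assert (Hst : 0 < sin t) by nra.
    assert (Hsgt : 0 < sin (g - t)) by nra.
    assert (Ht0 : 0 < t).
    { destruct (Rle_or_lt t 0) as [Ht|Ht]; [|assumption].
      pose proof (sin_ge_0 (- t) ltac:(lra) ltac:(lra)). rewrite sin_neg in *. lra. }
    assert (Htg : t < g).
    { destruct (Rle_or_lt g t) as [Ht|Ht]; [|assumption].
      pose proof (sin_ge_0 (t - g) ltac:(lra) ltac:(lra)).
      replace (g - t) with (- (t - g)) in Hsgt by ring. rewrite sin_neg in Hsgt. lra. }
    repeat split; assumption.
Qed.

Lemma snd_sub_le_Cmod (w z : C) : Rabs (snd w - snd z) <= Cmod (Cminus w z).
Proof. eapply Rle_trans; [apply Rmax_r | exact (Rmax_Cmod (Cminus w z))]. Qed.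

Lemma fst_sub_le_Cmod (w z : C) : Rabs (fst w - fst z) <= Cmod (Cminus w z).
Proof. eapply Rle_trans; [apply Rmax_l | exact (Rmax_Cmod (Cminus w z))]. Qed.

Lemma edge_gap_sub_le g (w z : C) : Rabs (edge_gap g w - edge_gap g z) <= 2 * Cmod (Cminus w z).
Proof.
  pose proof (fst_sub_le_Cmod w z). pose proof (snd_sub_le_Cmod w z).
  replace (edge_gap g w - edge_gap g z) with ((fst w - fst z) * sin g + - ((snd w - snd z) * cos g))
    by (unfold edge_gap; ring).
  eapply Rle_trans; [apply Rabs_triang|]. rewrite Rabs_Ropp, !Rabs_mult.
  assert (Rabs (sin g) <= 1) by (apply Rabs_le, SIN_bound).
  assert (Rabs (cos g) <= 1) by (apply Rabs_le, COS_bound).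
  pose proof (Rabs_pos (fst w - fst z)). pose proof (Rabs_pos (snd w - snd z)).
  pose proof (Rabs_pos (sin g)). pose proof (Rabs_pos (cos g)). nra.
Qed.

Lemma pos_iff_of_near u v : Rabs (u - v) < Rabs v -> (0 < u <-> 0 < v).
Proof. unfold Rabs. destruct (Rcase_abs (u - v)), (Rcase_abs v); lra. Qed.

Lemma boundary_sector_edge g z : 0 < g <= PI -> boundary (sector g) z ->
  snd z = 0 \/ edge_gap g z = 0.
Proof.
  intros Hg Hb. destruct (Req_dec (snd z) 0) as [|Hy]; [now left|]. right.
  destruct (Req_dec (edge_gap g z) 0) as [|Hgap]; [assumption|exfalso].
  pose proof (Rabs_pos_lt _ Hy). pose proof (Rabs_pos_lt _ Hgap).
  set (eps := Rmin (Rabs (snd z)) (Rabs (edge_gap g z)) / 2).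
  assert (Heps : 0 < eps) by (unfold eps; apply Rmin_case; lra).
  assert (Hnear : forall w, Cmod (Cminus w z) < eps ->
                    (sector g w <-> 0 < snd z /\ 0 < edge_gap g z)).
  { intros w Hw. rewrite sector_iff by assumption.
    pose proof (Rmin_l (Rabs (snd z)) (Rabs (edge_gap g z))).
    pose proof (Rmin_r (Rabs (snd z)) (Rabs (edge_gap g z))).
    pose proof (snd_sub_le_Cmod w z). pose proof (edge_gap_sub_le g w z).
    rewrite (pos_iff_of_near (snd w) (snd z)), (pos_iff_of_near (edge_gap g w) (edge_gap g z))
      by (unfold eps in Hw; lra).
    reflexivity. }
  destruct (Hb eps Heps) as [[w1 [Hin H1]] [w2 [Hout H2]]].
  apply Hout, (Hnear w2 H2), (Hnear w1 H1), Hin.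
Qed.

Lemma boundary_sector_polar g z : 0 < g <= PI -> boundary (sector g) z ->
  exists t, z = polar t 0 \/ z = polar t g.
Proof.
  intros Hg Hb. destruct z as [x y].
  destruct (boundary_sector_edge g (x, y) Hg Hb) as [Hy|Hgap]; cbn [snd] in *.
  - exists x. left. unfold polar. rewrite cos_0, sin_0, Hy. f_equal; ring.
  - exists (x * cos g + y * sin g). right. unfold edge_gap in Hgap; cbn [fst snd] in Hgap.
    unfold polar. f_equal.
    + transitivity (x * (sin g ^ 2 + cos g ^ 2)); [rewrite sin2_add_cos2; ring|].
      transitivity ((x * cos g + y * sin g) * cos g + sin g * (x * sin g - y * cos g)); [ring|].
      rewrite Hgap. ring.
    + transitivity (y * (sin g ^ 2 + cos g ^ 2)); [rewrite sin2_add_cos2; ring|].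
      transitivity ((x * cos g + y * sin g) * sin g - cos g * (x * sin g - y * cos g)); [ring|].
      rewrite Hgap. ring.
Qed.

Lemma Cmod_add_sub (z u : C) : Cmod (Cminus (Cplus z u) z) = Cmod u.
Proof. unfold Cmod, Cminus, Cplus, Copp; cbn [fst snd]. f_equal. ring. Qed.

Lemma boundary_sector_of_edge g z : 0 < g <= PI -> 0 <= snd z -> 0 <= edge_gap g z ->
  snd z = 0 \/ edge_gap g z = 0 -> boundary (sector g) z.
Proof.
  intros Hg Hy Hgap Hedge eps Heps. pose proof PI_RGT_0.
  set (eta := eps / 2).
  assert (Hs : 0 < sin (g / 2)) by (apply sin_gt_0; lra).
  assert (Hlin : forall u, snd (Cplus z u) = snd z + snd u /\
                           edge_gap g (Cplus z u) = edge_gap g z + edge_gap g u)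
    by (intros u; unfold edge_gap, Cplus; cbn [fst snd]; split; ring).
  split.
  - exists (Cplus z (polar eta (g / 2))). split.
    + apply sector_iff; [assumption|]. destruct (Hlin (polar eta (g / 2))) as [-> ->].
      rewrite edge_gap_polar. replace (g - g / 2) with (g / 2) by field.
      unfold polar; cbn [snd]. unfold eta. split; nra.
    + rewrite Cmod_add_sub, Cmod_polar; unfold eta; lra.
  - destruct Hedge as [Hy0|Hgap0].
    + exists (Cplus z (polar eta (- (PI / 2)))). split.
      * rewrite sector_iff by assumption. destruct (Hlin (polar eta (- (PI / 2)))) as [-> _].
        unfold polar; cbn [snd]. rewrite sin_neg, sin_PI2. unfold eta. lra.
      * rewrite Cmod_add_sub, Cmod_polar; unfold eta; lra.
    + exists (Cplus z (polar eta (g + PI / 2))). split.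
      * rewrite sector_iff by assumption. destruct (Hlin (polar eta (g + PI / 2))) as [_ ->].
        rewrite edge_gap_polar. replace (g - (g + PI / 2)) with (- (PI / 2)) by ring.
        rewrite sin_neg, sin_PI2. unfold eta. lra.
      * rewrite Cmod_add_sub, Cmod_polar; unfold eta; lra.
Qed.

Lemma boundary_sector_ray g t a : 0 < g <= PI -> 0 <= t -> a = 0 \/ a = g ->
  boundary (sector g) (polar t a).
Proof.
  intros Hg Ht Ha. pose proof PI_RGT_0.
  assert (0 <= sin g) by (apply sin_ge_0; lra).
  apply boundary_sector_of_edge; [assumption| | |]; rewrite ?edge_gap_polar; unfold polar; cbn [snd];
    destruct Ha as [-> | ->]; rewrite ?Rminus_0_r, ?Rminus_eq_0, ?sin_0; nra.
Qed.

(** * The triangular ratio metric of a sector *)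

Lemma Cmod_sub_triangle (x z y : C) : Cmod (Cminus x y) <= Cmod (Cminus x z) + Cmod (Cminus z y).
Proof.
  replace (Cminus x y) with (Cplus (Cminus x z) (Cminus z y))
    by (unfold Cminus, Cplus, Copp; cbn; f_equal; ring).
  apply Cmod_triangle.
Qed.

Lemma cos_le_of_between A u : 0 <= A <= PI -> A <= u <= 2 * PI - A -> cos u <= cos A.
Proof.
  intros HA Hu. destruct (Rle_or_lt u PI).
  - apply cos_decr_1; lra.
  - replace (cos u) with (cos (2 * PI - u)) by (rewrite cos_minus, cos_2PI, sin_2PI; ring).
    apply cos_decr_1; lra.
Qed.

Lemma dist_at_angle_le r s u v : 0 <= r -> 0 <= s -> cos v <= cos u ->
  dist_at_angle r s u <= dist_at_angle r s v.
Proof. intros Hr Hs Hcos. apply sqrt_le_1_alt. pose proof (Rmult_le_pos r s Hr Hs). nra. Qed.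

(* [polar s (2 * a - ph)] is the mirror image of [polar s ph] in the line of angle [a] *)
Lemma polar_sub_Cmod_reflect t a s ph :
  Cmod (Cminus (polar t a) (polar s ph)) = Cmod (Cminus (polar t a) (polar s (2 * a - ph))).
Proof.
  rewrite !polar_sub_Cmod. replace (a - (2 * a - ph)) with (- (a - ph)) by ring.
  unfold dist_at_angle. now rewrite cos_neg.
Qed.

(* [polar t 0] is where the segment from [polar r th] to [polar s (- ph)] meets the real axis *)
Lemma real_axis_path_attained r s th ph : 0 < r -> 0 < s -> 0 < th < PI -> 0 < ph < PI ->
  th + ph <= PI -> exists t, 0 <= t /\
    Cmod (Cminus (polar r th) (polar t 0)) + Cmod (Cminus (polar t 0) (polar s ph)) =
    dist_at_angle r s (th + ph).
Proof.
  intros Hr Hs Hth Hph Hsum.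
  assert (Hx2 : 0 < r * sin th) by (apply Rmult_lt_0_compat; [|apply sin_gt_0]; lra).
  assert (Hy2 : 0 < s * sin ph) by (apply Rmult_lt_0_compat; [|apply sin_gt_0]; lra).
  set (x1 := r * cos th) in *. set (x2 := r * sin th) in *.
  set (y1 := s * cos ph) in *. set (y2 := s * sin ph) in *.
  set (lam := x2 / (x2 + y2)).
  assert (Hlam : 0 <= lam <= 1).
  { unfold lam. split; [apply Rdiv_le_0_compat; lra|].
    apply Rmult_le_reg_r with (x2 + y2); [lra|]. field_simplify; lra. }
  exists (x1 + lam * (y1 - x1)). split.
  - replace (x1 + lam * (y1 - x1)) with (r * s * sin (th + ph) / (x2 + y2))
      by (unfold lam, x1, x2, y1, y2; rewrite sin_plus; field; fold x2 y2; lra).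
    apply Rdiv_le_0_compat; [|lra].
    apply Rmult_le_pos; [nra|]. apply sin_ge_0; lra.
  - set (Q := (x1 - y1) ^ 2 + (x2 + y2) ^ 2).
    assert (HQ : 0 <= Q)
      by (unfold Q; pose proof (pow2_ge_0 (x1 - y1)); pose proof (pow2_ge_0 (x2 + y2)); lra).
    assert (Hk : forall k, 0 <= k -> sqrt (k ^ 2 * Q) = k * sqrt Q)
      by (intros k Hk; rewrite sqrt_mult, sqrt_pow2 by (auto; apply pow2_ge_0); reflexivity).
    assert (E1 : Cmod (Cminus (polar r th) (polar (x1 + lam * (y1 - x1)) 0)) = lam * sqrt Q).
    { rewrite <- Hk by lra. unfold Cmod, Cminus, Cplus, Copp, polar; cbn [fst snd].
      rewrite cos_0, sin_0. fold x1 x2. f_equal. unfold Q, lam. field. lra. }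
    assert (E2 : Cmod (Cminus (polar (x1 + lam * (y1 - x1)) 0) (polar s ph)) = (1 - lam) * sqrt Q).
    { rewrite <- Hk by lra. unfold Cmod, Cminus, Cplus, Copp, polar; cbn [fst snd].
      rewrite cos_0, sin_0. fold y1 y2. f_equal. unfold Q, lam. field. lra. }
    rewrite E1, E2. replace (lam * sqrt Q + (1 - lam) * sqrt Q) with (sqrt Q) by ring.
    unfold dist_at_angle. f_equal. unfold Q, x1, x2, y1, y2. rewrite cos_plus.
    pose proof (sin2_add_cos2 th). pose proof (sin2_add_cos2 ph). nra.
Qed.

Lemma Glb_Rbar_attained (E : R -> Prop) m : (forall v, E v -> m <= v) -> E m -> real (Glb_Rbar E) = m.
Proof.
  intros Hlow Hm. rewrite (is_glb_Rbar_unique E m); [reflexivity|]. split.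
  - intros v Hv. exact (Hlow v Hv).
  - intros b Hb. exact (Hb m Hm).
Qed.

Section SectorPaths.

Variables (g r s th ph : R).
Hypotheses (Hg : 0 < g <= PI) (Hr : 0 < r) (Hs : 0 < s) (Hth : 0 < th < g) (Hph : 0 < ph < g).

(* the angle between [polar r th] and the mirror image of [polar s ph] in the nearer edge *)
Let A := Rmin (th + ph) (2 * g - th - ph).

Lemma boundary_path_ge z : boundary (sector g) z ->
  dist_at_angle r s A <= Cmod (Cminus (polar r th) z) + Cmod (Cminus z (polar s ph)).
Proof.
  intros Hz. pose proof PI_RGT_0.
  assert (HA1 : A <= th + ph) by apply Rmin_l. assert (HA2 : A <= 2 * g - th - ph) by apply Rmin_r.
  assert (HA : 0 < A) by (unfold A; apply Rmin_case; lra).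
  destruct (boundary_sector_polar g z Hg Hz) as [t [-> | ->]];
    rewrite (polar_sub_Cmod_reflect t); (eapply Rle_trans; [|apply Cmod_sub_triangle]);
    rewrite polar_sub_Cmod; apply dist_at_angle_le; try lra.
  - replace (th - (2 * 0 - ph)) with (th + ph) by ring. apply cos_le_of_between; lra.
  - replace (th - (2 * g - ph)) with (- (2 * g - th - ph)) by ring. rewrite cos_neg.
    apply cos_le_of_between; lra.
Qed.

Lemma boundary_path_attained : exists z, boundary (sector g) z /\
  dist_at_angle r s A = Cmod (Cminus (polar r th) z) + Cmod (Cminus z (polar s ph)).
Proof.
  pose proof PI_RGT_0. unfold A.
  destruct (Rle_or_lt (th + ph) (2 * g - th - ph)) as [Hle|Hlt].
  - rewrite Rmin_left by lra.
    destruct (real_axis_path_attained r s th ph) as [t [Ht Et]]; try lra.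
    exists (polar t 0). split; [apply boundary_sector_ray; auto | auto].
  - rewrite Rmin_right by lra.
    destruct (real_axis_path_attained r s (g - th) (g - ph)) as [t [Ht Et]]; try lra.
    exists (polar t g). split; [apply boundary_sector_ray; auto|].
    rewrite !polar_sub_Cmod in *.
    replace (th - g) with (- (g - th - 0)) by ring. replace (g - ph) with (- (0 - (g - ph))) by ring.
    unfold dist_at_angle in *. rewrite !cos_neg.
    replace (2 * g - th - ph) with (g - th + (g - ph)) by ring. rewrite <- Et. reflexivity.
Qed.

Lemma s_metric_sector_polar :
  s_metric (sector g) (polar r th) (polar s ph) =
  s_polar ((ln s - ln r) / 2) (Rabs (th - ph) / 2) (A / 2).
Proof.
  pose proof PI_RGT_0.
  assert (HA1 : A <= th + ph) by apply Rmin_l. assert (HA2 : A <= 2 * g - th - ph) by apply Rmin_r.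
  assert (HA : 0 < A) by (unfold A; apply Rmin_case; lra).
  unfold s_metric. rewrite (Glb_Rbar_attained _ (dist_at_angle r s A)).
  - rewrite polar_sub_Cmod. unfold dist_at_angle. rewrite !law_of_cosines_chord by assumption.
    assert (HsA : 0 < sin (A / 2)) by (apply sin_gt_0; lra).
    assert (Hc : 0 < chord ((ln s - ln r) / 2) (A / 2)) by now apply chord_pos.
    replace (chord ((ln s - ln r) / 2) ((th - ph) / 2))
      with (chord ((ln s - ln r) / 2) (Rabs (th - ph) / 2)).
    + unfold s_polar. rewrite <- sqrt_div_alt by (apply Rmult_lt_0_compat; [nra | assumption]).
      f_equal. field. lra.
    + unfold chord, Rabs. destruct (Rcase_abs (th - ph)); [|reflexivity].
      replace (- (th - ph) / 2) with (- ((th - ph) / 2)) by field. rewrite sin_neg. ring.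
  - intros v [z [Hz ->]]. now apply boundary_path_ge.
  - destruct boundary_path_attained as [z [Hz Ez]]. now exists z.
Qed.

End SectorPaths.

Lemma s_metric_cpow_polar alpha beta r s th ph : 0 < alpha <= PI -> 0 < beta <= PI ->
  0 < r -> 0 < s -> 0 < th < alpha -> 0 < ph < alpha ->
  s_metric (sector beta) (cpow (polar r th) (beta / alpha)) (cpow (polar s ph) (beta / alpha)) =
  s_polar (beta / alpha * ((ln s - ln r) / 2)) (beta / alpha * (Rabs (th - ph) / 2))
    (beta / alpha * (Rmin (th + ph) (2 * alpha - th - ph) / 2)).
Proof.
  intros Ha Hb Hr Hs Hth Hph.
  set (p := beta / alpha).
  assert (Hp : 0 < p) by (apply Rdiv_lt_0_compat; lra).
  assert (Hbp : beta = p * alpha) by (unfold p; field; lra).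
  rewrite !cpow_polar by lra.
  rewrite s_metric_sector_polar by (unfold Rpower; try apply exp_pos; nra).
  f_equal.
  - unfold Rpower. rewrite !ln_exp. field.
  - replace (p * th - p * ph) with (p * (th - ph)) by ring.
    rewrite Rabs_mult, (Rabs_right p) by lra. field.
  - rewrite Hbp. replace (p * th + p * ph) with (p * (th + ph)) by ring.
    replace (2 * (p * alpha) - p * th - p * ph) with (p * (2 * alpha - th - ph)) by ring.
    rewrite <- Rmult_min_distr_l by lra. field.
Qed.

Lemma s_metric_cpow_log_polar alpha beta x y : 0 < alpha <= PI -> 0 < beta <= PI ->
  sector alpha x -> sector alpha y ->
  exists w d e, 0 <= d <= e /\ 0 < e <= alpha / 2 /\
    s_metric (sector alpha) x y = s_polar w d e /\
    s_metric (sector beta) (cpow x (beta / alpha)) (cpow y (beta / alpha)) =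
      s_polar (beta / alpha * w) (beta / alpha * d) (beta / alpha * e).
Proof.
  intros Ha Hb [Hx0 Hx] [Hy0 Hy].
  destruct (polar_Cmod_Arg x Hx0) as [Ex _]. destruct (polar_Cmod_Arg y Hy0) as [Ey _].
  pose proof (proj1 (Cmod_gt_0 x) Hx0). pose proof (proj1 (Cmod_gt_0 y) Hy0).
  set (r := Cmod x) in *. set (s := Cmod y) in *. set (th := Arg x) in *. set (ph := Arg y) in *.
  clearbody r s th ph. subst x y.
  assert (Hm1 := Rmin_l (th + ph) (2 * alpha - th - ph)).
  assert (Hm2 := Rmin_r (th + ph) (2 * alpha - th - ph)).
  assert (Hm0 : 0 < Rmin (th + ph) (2 * alpha - th - ph)) by (apply Rmin_case; lra).
  assert (Hd : Rabs (th - ph) <= Rmin (th + ph) (2 * alpha - th - ph))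
    by (apply Rmin_case; apply Rabs_le; lra).
  exists ((ln s - ln r) / 2), (Rabs (th - ph) / 2), (Rmin (th + ph) (2 * alpha - th - ph) / 2).
  rewrite s_metric_sector_polar, s_metric_cpow_polar by lra.
  pose proof (Rabs_pos (th - ph)).
  repeat split; lra.
Qed.

Lemma one_le_ratio alpha beta : 0 < alpha <= beta -> 1 <= beta / alpha.
Proof. intros Ha. apply Rmult_le_reg_r with alpha; [lra|]. field_simplify; lra. Qed.

Lemma ratio_in_unit alpha beta : 0 < beta <= alpha -> 0 < beta / alpha <= 1.
Proof.
  intros Hb. split; [apply Rdiv_lt_0_compat; lra|].
  apply Rmult_le_reg_r with alpha; [lra|]. field_simplify; lra.
Qed.

(** * Sharpness *)

Lemma sector_polar g r t : 0 < g <= PI -> 0 < r -> 0 < t < g -> sector g (polar r t).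
Proof.
  intros Hg Hr Ht. unfold sector. rewrite Arg_polar by lra. split; [|lra].
  intros E. pose proof (Cmod_polar r t ltac:(lra)) as Hm. rewrite E, Cmod_0 in Hm. lra.
Qed.

Lemma s_polar_zero_half t : 0 < t < PI -> s_polar 0 (t / 2) t = / (2 * cos (t / 2)).
Proof.
  intros Ht. pose proof PI_RGT_0.
  assert (Hc : 0 < cos (t / 2)) by (apply cos_gt_0; lra).
  assert (Hs : 0 < sin (t / 2)) by (apply sin_gt_0; lra).
  unfold s_polar, chord. rewrite sinh_0.
  replace t with (2 * (t / 2)) at 2 by field. rewrite sin_2a.
  replace ((0 ^ 2 + sin (t / 2) ^ 2) / (0 ^ 2 + (2 * sin (t / 2) * cos (t / 2)) ^ 2))
    with ((/ (2 * cos (t / 2))) ^ 2) by (field; lra).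
  apply sqrt_pow2. apply Rlt_le, Rinv_0_lt_compat. lra.
Qed.

Lemma unit_circle_pair alpha beta eps : 0 < alpha <= PI -> 0 < beta <= PI -> 0 < eps <= alpha / 2 ->
  sector alpha (polar 1 (eps / 2)) /\ sector alpha (polar 1 (3 * eps / 2)) /\
  polar 1 (eps / 2) <> polar 1 (3 * eps / 2) /\
  s_metric (sector alpha) (polar 1 (eps / 2)) (polar 1 (3 * eps / 2)) = / (2 * cos (eps / 2)) /\
  s_metric (sector beta) (cpow (polar 1 (eps / 2)) (beta / alpha))
    (cpow (polar 1 (3 * eps / 2)) (beta / alpha)) = / (2 * cos (beta / alpha * eps / 2)).
Proof.
  intros Ha Hb He. pose proof PI_RGT_0.
  assert (Hp : 0 < beta / alpha) by (apply Rdiv_lt_0_compat; lra).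
  assert (Hd : Rabs (eps / 2 - 3 * eps / 2) / 2 = eps / 2).
  { replace (eps / 2 - 3 * eps / 2) with (- eps) by field. rewrite Rabs_Ropp, Rabs_right by lra. field. }
  assert (He' : Rmin (eps / 2 + 3 * eps / 2) (2 * alpha - eps / 2 - 3 * eps / 2) / 2 = eps)
    by (rewrite Rmin_left by lra; field).
  rewrite s_metric_sector_polar, s_metric_cpow_polar, Hd, He', Rminus_diag, !Rdiv_0_l, Rmult_0_r
    by lra.
  split; [apply sector_polar; lra|]. split; [apply sector_polar; lra|].
  split; [|split].
  - intros E. apply (f_equal Arg) in E. rewrite !Arg_polar in E; lra.
  - apply s_polar_zero_half. lra.
  - replace (beta / alpha * (eps / 2)) with (beta / alpha * eps / 2) by (field; lra).
    assert (Hpe : beta / alpha * eps <= beta / 2).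
    { apply Rmult_le_reg_r with alpha; [lra|].
      replace (beta / alpha * eps * alpha) with (beta * eps) by (field; lra). nra. }
    apply s_polar_zero_half. split; [nra | lra].
Qed.

Lemma bisector_pair alpha beta w : 0 < alpha <= PI -> 0 < beta <= PI -> 0 < w ->
  sector alpha (polar 1 (alpha / 2)) /\ sector alpha (polar (exp (2 * w)) (alpha / 2)) /\
  polar 1 (alpha / 2) <> polar (exp (2 * w)) (alpha / 2) /\
  s_metric (sector alpha) (polar 1 (alpha / 2)) (polar (exp (2 * w)) (alpha / 2)) =
    s_polar w 0 (alpha / 2) /\
  s_metric (sector beta) (cpow (polar 1 (alpha / 2)) (beta / alpha))
    (cpow (polar (exp (2 * w)) (alpha / 2)) (beta / alpha)) =
    s_polar (beta / alpha * w) 0 (beta / 2).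
Proof.
  intros Ha Hb Hw.
  assert (Hexp : 1 < exp (2 * w)) by (rewrite <- exp_0; apply exp_increasing; lra).
  assert (Hln : (ln (exp (2 * w)) - ln 1) / 2 = w) by (rewrite ln_exp, ln_1; field).
  assert (Hd : Rabs (alpha / 2 - alpha / 2) / 2 = 0) by (rewrite Rminus_diag, Rabs_R0; field).
  assert (He : Rmin (alpha / 2 + alpha / 2) (2 * alpha - alpha / 2 - alpha / 2) / 2 = alpha / 2)
    by (rewrite Rmin_left by lra; field).
  rewrite s_metric_sector_polar, s_metric_cpow_polar, Hln, Hd, He, Rmult_0_r by lra.
  replace (beta / alpha * (alpha / 2)) with (beta / 2) by (field; lra).
  split; [apply sector_polar; lra|]. split; [apply sector_polar; lra|].
  split; [|split; reflexivity].
  intros E. apply (f_equal Cmod) in E. rewrite !Cmod_polar in E; lra.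
Qed.

Lemma exists_cos_gt m : m < 1 -> exists delta, 0 < delta /\ forall t, 0 <= t <= delta -> m < cos t.
Proof.
  intros Hm. destruct (continuity_cos 0 (1 - m)) as [delta [Hdelta Hnear]]; [lra|].
  exists (delta / 2). split; [lra|]. intros t Ht.
  destruct (Req_dec t 0) as [->|Ht0]; [rewrite cos_0; lra|].
  assert (Hd : R_dist (cos t) (cos 0) < 1 - m).
  { apply Hnear. split; [split; [exact I | auto] |].
    cbn. unfold R_dist. rewrite Rminus_0_r, Rabs_right; lra. }
  unfold R_dist in Hd. rewrite cos_0 in Hd. apply Rabs_def2 in Hd. lra.
Qed.

Lemma exists_sinh_sq_small A B : 0 < B -> exists w, 0 < w /\ A * sinh w ^ 2 < B.
Proof.
  intros HB. pose proof (Rabs_pos A). pose proof (Rle_abs A).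
  set (v := Rmin (1 / 2) (B / (Rabs A + 1))).
  assert (Hv0 : 0 < v) by (unfold v; apply Rmin_case; [lra | apply Rdiv_lt_0_compat; lra]).
  assert (Hv1 : v <= 1 / 2) by apply Rmin_l.
  assert (Hv2 : v * (Rabs A + 1) <= B).
  { pose proof (Rmin_r (1 / 2) (B / (Rabs A + 1))) as Hr. fold v in Hr.
    apply Rmult_le_reg_r with (/ (Rabs A + 1)); [apply Rinv_0_lt_compat; lra|].
    replace (v * (Rabs A + 1) * / (Rabs A + 1)) with v by (field; lra). exact Hr. }
  exists (arcsinh v). rewrite sinh_arcsinh. split.
  - rewrite <- arcsinh_0. now apply arcsinh_lt.
  - assert (v ^ 2 <= v) by nra.
    assert (A * v ^ 2 <= Rabs A * v ^ 2) by (apply Rmult_le_compat_r; [apply pow2_ge_0 | assumption]).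
    assert (Rabs A * v ^ 2 <= Rabs A * v) by (apply Rmult_le_compat_l; assumption).
    lra.
Qed.

Lemma mul_sqrt c x : 0 <= c -> c * sqrt x = sqrt (c ^ 2 * x).
Proof.
  intros Hc. rewrite sqrt_mult_alt, sqrt_pow2 by (try apply pow2_ge_0; assumption). reflexivity.
Qed.

Lemma s_polar_bisector w g : s_polar w 0 g = sqrt (sinh w ^ 2 / (sinh w ^ 2 + sin g ^ 2)).
Proof. unfold s_polar, chord. rewrite sin_0. f_equal. f_equal. ring. Qed.

Lemma s_polar_bisector_gain_gt p g c : 1 <= p -> 0 < g -> p * g <= PI / 2 ->
  c < p * sin g / sin (p * g) -> exists w, 0 < w /\ c * s_polar w 0 g < s_polar (p * w) 0 (p * g).
Proof.
  intros Hp Hg Hpg Hc. pose proof PI_RGT_0.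
  assert (Hsg : 0 < sin g) by (apply sin_gt_0; nra).
  assert (Hspg : 0 < sin (p * g)) by (apply sin_gt_0; nra).
  assert (Hpos : forall w, 0 < w -> 0 < s_polar (p * w) 0 (p * g)).
  { intros w Hw. rewrite s_polar_bisector.
    assert (0 < sinh (p * w) ^ 2) by (apply pow_lt, sinh_pos; nra).
    assert (0 < sin (p * g) ^ 2) by (apply pow_lt; lra).
    apply sqrt_lt_R0, Rdiv_lt_0_compat; lra. }
  destruct (Rle_or_lt c 0) as [Hc0|Hc0].
  { exists 1. split; [lra|]. pose proof (Hpos 1 ltac:(lra)).
    pose proof (sqrt_pos (chord 1 0 / chord 1 g)). unfold s_polar in *. nra. }
  set (S := sin g ^ 2). set (S' := sin (p * g) ^ 2).
  assert (HS : 0 < S) by (apply pow_lt; lra). assert (HS' : 0 < S') by (apply pow_lt; lra).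
  assert (Hgap : c ^ 2 * S' < p ^ 2 * S).
  { assert (c * sin (p * g) < p * sin g) by (apply Rlt_div_r; lra).
    assert (0 < c * sin (p * g)) by nra. unfold S, S'. nra. }
  destruct (exists_sinh_sq_small (p ^ 2 * (c ^ 2 - 1)) (p ^ 2 * S - c ^ 2 * S')) as [w [Hw Hsmall]];
    [lra|].
  exists w. split; [assumption|].
  pose proof (sinh_sq_scale_ge p w Hp) as Hscale.
  rewrite !s_polar_bisector. fold S S'.
  set (a := sinh w ^ 2) in *. set (a' := sinh (p * w) ^ 2) in *.
  assert (Ha : 0 < a) by (apply pow_lt, sinh_pos; lra).
  assert (Hp2 : 1 <= p ^ 2) by nra. assert (Ha' : 0 < a') by nra.
  rewrite mul_sqrt by lra. apply sqrt_lt_1_alt.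
  split; [apply Rmult_le_pos; [nra | apply Rdiv_le_0_compat; lra]|].
  apply Rmult_lt_reg_r with ((a + S) * (a' + S')); [nra|].
  replace (c ^ 2 * (a / (a + S)) * ((a + S) * (a' + S'))) with (c ^ 2 * a * (a' + S')) by (field; lra).
  replace (a' / (a' + S') * ((a + S) * (a' + S'))) with (a' * (a + S)) by (field; lra).
  (* with [X := a + S - c^2 a] the claim reads [c^2 a S' < a' X], and [a' >= p^2 a] *)
  set (X := a * (1 - c ^ 2) + S).
  assert (HX : c ^ 2 * S' < p ^ 2 * X) by (unfold X; nra).
  assert (0 < X) by nra.
  assert (p ^ 2 * a * X <= a' * X) by (apply Rmult_le_compat_r; lra).
  assert (c ^ 2 * a * S' < p ^ 2 * a * X) by nra.
  unfold X in *. nra.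
Qed.

Lemma s_polar_bisector_gain_lt p g c : 0 < p <= 1 -> 0 < g <= PI / 2 ->
  p * sin g / sin (p * g) < c -> exists w, 0 < w /\ s_polar (p * w) 0 (p * g) < c * s_polar w 0 g.
Proof.
  intros Hp Hg Hc. pose proof PI_RGT_0.
  assert (Hsg : 0 < sin g) by (apply sin_gt_0; nra).
  assert (Hspg : 0 < sin (p * g)) by (apply sin_gt_0; nra).
  assert (Hc0 : 0 < c) by (assert (0 < p * sin g / sin (p * g)) by (apply Rdiv_lt_0_compat; nra); lra).
  set (S := sin g ^ 2). set (S' := sin (p * g) ^ 2).
  assert (HS : 0 < S) by (apply pow_lt; lra). assert (HS' : 0 < S') by (apply pow_lt; lra).
  assert (Hgap : p ^ 2 * S < c ^ 2 * S').
  { assert (p * sin g < c * sin (p * g)) by (apply Rlt_div_l; lra).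
    assert (0 < p * sin g) by nra. unfold S, S'. nra. }
  destruct (exists_sinh_sq_small (p ^ 2 * (1 - c ^ 2)) (c ^ 2 * S' - p ^ 2 * S)) as [w [Hw Hsmall]];
    [lra|].
  exists w. split; [assumption|].
  assert (Hscale : sinh (p * w) ^ 2 <= p ^ 2 * sinh w ^ 2).
  { pose proof (sinh_sq_scale_ge (/ p) (p * w)) as Hinv.
    replace (/ p * (p * w)) with w in Hinv by (field; lra).
    apply Rmult_le_reg_l with ((/ p) ^ 2); [apply pow_lt, Rinv_0_lt_compat; lra|].
    replace ((/ p) ^ 2 * (p ^ 2 * sinh w ^ 2)) with (sinh w ^ 2) by (field; lra).
    apply Hinv. rewrite <- Rinv_1. apply Rinv_le_contravar; lra. }
  rewrite !s_polar_bisector. fold S S'.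
  set (a := sinh w ^ 2) in *. set (a' := sinh (p * w) ^ 2) in *.
  assert (Ha : 0 < a) by (apply pow_lt, sinh_pos; lra).
  assert (Ha' : 0 <= a') by apply pow2_ge_0.
  rewrite mul_sqrt by lra. apply sqrt_lt_1_alt.
  split; [apply Rdiv_le_0_compat; lra|].
  apply Rmult_lt_reg_r with ((a + S) * (a' + S')); [nra|].
  replace (c ^ 2 * (a / (a + S)) * ((a + S) * (a' + S'))) with (c ^ 2 * a * (a' + S')) by (field; lra).
  replace (a' / (a' + S') * ((a + S) * (a' + S'))) with (a' * (a + S)) by (field; lra).
  (* with [Y := a + S - c^2 a] the claim reads [a' Y < c^2 a S'], and [a' <= p^2 a] *)
  set (Y := a * (1 - c ^ 2) + S).
  assert (HY : p ^ 2 * Y < c ^ 2 * S') by (unfold Y; nra).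
  assert (a' * Y < c ^ 2 * a * S').
  { destruct (Rle_or_lt Y 0) as [HY0|HY0].
    - assert (a' * Y <= 0) by nra. assert (0 < c ^ 2 * a * S') by (apply Rmult_lt_0_compat; nra). lra.
    - assert (a' * Y <= p ^ 2 * a * Y) by (apply Rmult_le_compat_r; lra).
      assert (p ^ 2 * a * Y < c ^ 2 * a * S') by nra. lra. }
  unfold Y in *. nra.
Qed.

Lemma cpow_sharp_one_expand alpha beta c : 0 < alpha <= beta -> beta <= PI -> 1 < c ->
  exists x y, sector alpha x /\ sector alpha y /\ x <> y /\
    s_metric (sector beta) (cpow x (beta / alpha)) (cpow y (beta / alpha)) <
    c * s_metric (sector alpha) x y.
Proof.
  intros Ha Hb Hc. pose proof PI_RGT_0.
  set (p := beta / alpha).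
  assert (Hp : 1 <= p) by (apply one_le_ratio; lra).
  destruct (exists_cos_gt (/ c)) as [delta [Hdelta Hcos]].
  { rewrite <- Rinv_1. apply Rinv_lt_contravar; lra. }
  set (eps := Rmin (alpha / 2) (2 * delta / p)).
  assert (He0 : 0 < eps) by (unfold eps; apply Rmin_case; [lra | apply Rdiv_lt_0_compat; lra]).
  assert (He1 : eps <= alpha / 2) by apply Rmin_l.
  assert (He2 : p * eps / 2 <= delta).
  { pose proof (Rmin_r (alpha / 2) (2 * delta / p)) as Hr. fold eps in Hr.
    apply Rmult_le_compat_l with (r := p / 2) in Hr; [|lra].
    replace (p / 2 * (2 * delta / p)) with delta in Hr by (field; lra). lra. }
  destruct (unit_circle_pair alpha beta eps ltac:(lra) ltac:(lra) ltac:(lra))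
    as (Hx & Hy & Hxy & Halpha & Hbeta).
  exists (polar 1 (eps / 2)), (polar 1 (3 * eps / 2)).
  split; [assumption|]. split; [assumption|]. split; [assumption|].
  fold p in Hbeta. rewrite Halpha, Hbeta.
  pose proof (Hcos (p * eps / 2) ltac:(split; nra)) as Hu.
  assert (Hv : 0 < cos (eps / 2) <= 1) by (split; [apply cos_gt_0|apply COS_bound]; lra).
  assert (Hcu : 1 < c * cos (p * eps / 2)).
  { apply Rmult_lt_compat_l with (r := c) in Hu; [|lra].
    rewrite Rinv_r in Hu by lra. exact Hu. }
  assert (Hu0 : 0 < cos (p * eps / 2)) by (assert (0 < / c) by (apply Rinv_0_lt_compat; lra); lra).
  apply Rmult_lt_reg_r with (2 * cos (p * eps / 2) * cos (eps / 2)); [nra|].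
  replace (/ (2 * cos (p * eps / 2)) * (2 * cos (p * eps / 2) * cos (eps / 2))) with (cos (eps / 2))
    by (field; lra).
  replace (c * / (2 * cos (eps / 2)) * (2 * cos (p * eps / 2) * cos (eps / 2)))
    with (c * cos (p * eps / 2)) by (field; lra).
  lra.
Qed.

Lemma cpow_sharp_one_contract alpha beta c : 0 < beta < alpha -> alpha <= PI -> c < 1 ->
  exists x y, sector alpha x /\ sector alpha y /\ x <> y /\
    c * s_metric (sector alpha) x y <
    s_metric (sector beta) (cpow x (beta / alpha)) (cpow y (beta / alpha)).
Proof.
  intros Hb Ha Hc. pose proof PI_RGT_0.
  set (p := beta / alpha).
  assert (Hp : 0 < p <= 1) by (apply ratio_in_unit; lra).
  destruct (exists_cos_gt c Hc) as [delta [Hdelta Hcos]].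
  set (eps := Rmin (alpha / 2) (2 * delta)).
  assert (He0 : 0 < eps) by (unfold eps; apply Rmin_case; lra).
  assert (He1 : eps <= alpha / 2) by apply Rmin_l.
  assert (He2 : eps <= 2 * delta) by apply Rmin_r.
  destruct (unit_circle_pair alpha beta eps ltac:(lra) ltac:(lra) ltac:(lra))
    as (Hx & Hy & Hxy & Halpha & Hbeta).
  exists (polar 1 (eps / 2)), (polar 1 (3 * eps / 2)).
  split; [assumption|]. split; [assumption|]. split; [assumption|].
  fold p in Hbeta. rewrite Halpha, Hbeta.
  pose proof (Hcos (eps / 2) ltac:(split; lra)) as Hv.
  assert (Hv0 : 0 < cos (eps / 2)) by (apply cos_gt_0; lra).
  assert (Hu : 0 < cos (p * eps / 2) <= 1) by (split; [apply cos_gt_0|apply COS_bound]; nra).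
  apply Rmult_lt_reg_r with (2 * cos (p * eps / 2) * cos (eps / 2)); [nra|].
  replace (/ (2 * cos (p * eps / 2)) * (2 * cos (p * eps / 2) * cos (eps / 2))) with (cos (eps / 2))
    by (field; lra).
  replace (c * / (2 * cos (eps / 2)) * (2 * cos (p * eps / 2) * cos (eps / 2)))
    with (c * cos (p * eps / 2)) by (field; lra).
  destruct (Rle_or_lt c 0); nra.
Qed.

Lemma scale_half_angle alpha beta : 0 < alpha -> beta / alpha * (alpha / 2) = beta / 2.
Proof. intros Ha. field. lra. Qed.

Lemma power_gain_eq alpha beta : 0 < alpha <= PI -> 0 < beta <= PI ->
  beta * sin (alpha / 2) / (alpha * sin (beta / 2)) =
  beta / alpha * sin (alpha / 2) / sin (beta / alpha * (alpha / 2)).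
Proof.
  intros Ha Hb. rewrite scale_half_angle by lra.
  assert (0 < sin (beta / 2)) by (apply sin_gt_0; pose proof PI_RGT_0; lra).
  field. lra.
Qed.

Lemma cpow_sharp_gain_expand alpha beta c : 0 < alpha <= beta -> beta <= PI ->
  c < beta * sin (alpha / 2) / (alpha * sin (beta / 2)) ->
  exists x y, sector alpha x /\ sector alpha y /\ x <> y /\
    c * s_metric (sector alpha) x y <
    s_metric (sector beta) (cpow x (beta / alpha)) (cpow y (beta / alpha)).
Proof.
  intros Ha Hb Hc. pose proof PI_RGT_0.
  rewrite power_gain_eq in Hc by lra.
  assert (Hp : 1 <= beta / alpha) by (apply one_le_ratio; lra).
  destruct (s_polar_bisector_gain_gt (beta / alpha) (alpha / 2) c Hp ltac:(lra)
              ltac:(rewrite scale_half_angle; lra) Hc) as [w [Hw Hlt]].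
  destruct (bisector_pair alpha beta w ltac:(lra) ltac:(lra) Hw) as (Hx & Hy & Hxy & Halpha & Hbeta).
  exists (polar 1 (alpha / 2)), (polar (exp (2 * w)) (alpha / 2)).
  split; [assumption|]. split; [assumption|]. split; [assumption|].
  rewrite Halpha, Hbeta, <- (scale_half_angle alpha beta) by lra. exact Hlt.
Qed.

Lemma cpow_sharp_gain_contract alpha beta c : 0 < beta < alpha -> alpha <= PI ->
  beta * sin (alpha / 2) / (alpha * sin (beta / 2)) < c ->
  exists x y, sector alpha x /\ sector alpha y /\ x <> y /\
    s_metric (sector beta) (cpow x (beta / alpha)) (cpow y (beta / alpha)) <
    c * s_metric (sector alpha) x y.
Proof.
  intros Hb Ha Hc. pose proof PI_RGT_0.
  rewrite power_gain_eq in Hc by lra.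
  assert (Hp : 0 < beta / alpha <= 1) by (apply ratio_in_unit; lra).
  destruct (s_polar_bisector_gain_lt (beta / alpha) (alpha / 2) c Hp ltac:(lra) Hc) as [w [Hw Hlt]].
  destruct (bisector_pair alpha beta w ltac:(lra) ltac:(lra) Hw) as (Hx & Hy & Hxy & Halpha & Hbeta).
  exists (polar 1 (alpha / 2)), (polar (exp (2 * w)) (alpha / 2)).
  split; [assumption|]. split; [assumption|]. split; [assumption|].
  rewrite Halpha, Hbeta, <- (scale_half_angle alpha beta) by lra. exact Hlt.
Qed.

(** * Distortion bounds *)

Lemma cpow_s_metric_expand alpha beta x y : 0 < alpha <= beta -> beta <= PI ->
  sector alpha x -> sector alpha y ->
  s_metric (sector alpha) x y <=
  s_metric (sector beta) (cpow x (beta / alpha)) (cpow y (beta / alpha)) <=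
  beta * sin (alpha / 2) / (alpha * sin (beta / 2)) * s_metric (sector alpha) x y.
Proof.
  intros Ha Hb Hx Hy. pose proof PI_RGT_0.
  destruct (s_metric_cpow_log_polar alpha beta x y ltac:(lra) ltac:(lra) Hx Hy)
    as (w & d & e & Hde & He & -> & ->).
  rewrite power_gain_eq by lra.
  apply s_polar_expand_bounds; try lra.
  - apply one_le_ratio; lra.
  - rewrite scale_half_angle; lra.
Qed.

Lemma cpow_s_metric_contract alpha beta x y : 0 < beta < alpha -> alpha <= PI ->
  sector alpha x -> sector alpha y ->
  beta * sin (alpha / 2) / (alpha * sin (beta / 2)) * s_metric (sector alpha) x y <=
  s_metric (sector beta) (cpow x (beta / alpha)) (cpow y (beta / alpha)) <= s_metric (sector alpha) x y.
Proof.
  intros Hb Ha Hx Hy. pose proof PI_RGT_0.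
  destruct (s_metric_cpow_log_polar alpha beta x y ltac:(lra) ltac:(lra) Hx Hy)
    as (w & d & e & Hde & He & -> & ->).
  rewrite power_gain_eq by lra.
  apply s_polar_contract_bounds; try lra.
  apply ratio_in_unit; lra.
Qed.

Theorem lemma5p10 (alpha beta : R)
  (Ha : 0 < alpha <= PI) (Hb : 0 < beta <= PI) :
  let f := fun z => cpow z (beta / alpha) in
  let K := beta * sin (alpha / 2) / (alpha * sin (beta / 2)) in
  (alpha <= beta ->
     (forall x y, sector alpha x -> sector alpha y ->
        s_metric (sector alpha) x y <= s_metric (sector beta) (f x) (f y) /\
        s_metric (sector beta) (f x) (f y) <= K * s_metric (sector alpha) x y) /\
     (* sharpness *)
     (forall c, 1 < c -> exists x y, sector alpha x /\ sector alpha y /\ x <> y /\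
        s_metric (sector beta) (f x) (f y) < c * s_metric (sector alpha) x y) /\
     (forall c, c < K -> exists x y, sector alpha x /\ sector alpha y /\ x <> y /\
        c * s_metric (sector alpha) x y < s_metric (sector beta) (f x) (f y))) /\
  (beta < alpha ->
     (forall x y, sector alpha x -> sector alpha y ->
        K * s_metric (sector alpha) x y <= s_metric (sector beta) (f x) (f y) /\
        s_metric (sector beta) (f x) (f y) <= s_metric (sector alpha) x y) /\
     (forall c, K < c -> exists x y, sector alpha x /\ sector alpha y /\ x <> y /\
        s_metric (sector beta) (f x) (f y) < c * s_metric (sector alpha) x y) /\
     (forall c, c < 1 -> exists x y, sector alpha x /\ sector alpha y /\ x <> y /\
        c * s_metric (sector alpha) x y < s_metric (sector beta) (f x) (f y))).
Proof.
  intros f K. split; intros Hab; split; [| split | | split].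
  - intros x y Hx Hy. apply cpow_s_metric_expand; auto; lra.
  - intros c Hc. apply cpow_sharp_one_expand; auto; lra.
  - intros c Hc. apply cpow_sharp_gain_expand; auto; lra.
  - intros x y Hx Hy. apply cpow_s_metric_contract; auto; lra.
  - intros c Hc. apply cpow_sharp_gain_contract; auto; lra.
  - intros c Hc. apply cpow_sharp_one_contract; auto; lra.
Qed.
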